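(* Let $k$, $n$, $r$ be nonnegative integers and let $X$ be the set of labeled lattice sequences of type $(k,n,r)$. For $(\lambda,L)\in X$ with $\lambda$ of shape $\alpha$, assign the weight $\mathrm{wt}((\lambda,L))=\mathrm{sign}(\lambda) = (-1)^{|\alpha|-\ell(\alpha)}$. Then \[\sum_{(\lambda,L)\in X}\mathrm{wt}((\lambda,L))=\sum_{i=0}^k\binom{(r+1)i+n}{i}.\]
   Context: A composition $\alpha=(\alpha_1,\dots,\alpha_j)$ of $m\ge 0$ is a finite sequence of positive integers summing to $m$ (the empty composition $()$ is the composition of $0$); $|\alpha|$ is the sum of the parts, $\ell(\alpha)$ the number of parts. For $r\ge 0$, $c(m,r)$ is the set of compositions of $m$ with all parts in $\{2,\dots,r+1\}$, and $\mathcal{C}(k,r)=\bigcup_{m=0}^k c(m,r)$. A labeled tableau of shape $\alpha$ is a filling of the Young diagram of $\alpha$ (left-justified rows, row $i$ having $\alpha_i$ boxes) such that the first box of each row is empty and the remaining entries of each row are nonnegative integers strictly increasing from left to right; $\Lambda(\alpha,r)$ is the set of labeled tableaux of shape $\alpha$ all of whose entries are less than $r$. For $\lambda\in\Lambda(\alpha,r)$, $\mathrm{sign}(\lambda)=(-1)^{|\alpha|-\ell(\alpha)}$. A lattice sequence of width $m$ and height $h$ is a sequence of integers $(L_0,L_1,\dots,L_{m+1})$ with $0=L_0\le L_1\le\dots\le L_{m+1}=h$; $\mathcal{L}(m,h)$ denotes the set of these. A labeled lattice sequence of type $(k,n,r)$ is a pair $(\lambda,L)$ with $\lambda\in\Lambda(\alpha,r)$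 for some $\alpha\in\mathcal{C}(k,r)$ and $L\in\mathcal{L}(rk+n+1+\ell(\alpha),\,k-|\alpha|)$. *)

From mathcomp Require Import all_boot all_order all_algebra.
Set Implicit Arguments. Unset Strict Implicit. Unset Printing Implicit Defensive.
Import GRing.Theory Num.Theory.

(* A composition is a seq nat of positive parts; |alpha| = sumn alpha,
   l(alpha) = size alpha. *)
Definition composition (alpha : seq nat) : bool := all (fun a => 0 < a) alpha.

Definition in_c (m r : nat) (alpha : seq nat) : bool :=
  [&& composition alpha, all (fun a => 2 <= a <= r.+1) alpha & sumn alpha == m].

Definition in_C (k r : nat) (alpha : seq nat) : bool :=
  [exists m : 'I_k.+1, in_c m r alpha].

(* A labeled tableau is represented by the list of its rows, each row being
   the list of entries in its non-first boxes (the first box of each row is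
   empty). Row i thus has (size row_i).+1 boxes. *)
Definition tableau := seq (seq nat).

Definition shape (lam : tableau) : seq nat := map (fun row => (size row).+1) lam.

Definition in_Lambda (alpha : seq nat) (r : nat) (lam : tableau) : bool :=
  (shape lam == alpha) &&
  all (fun row => sorted ltn row && all (fun x => x < r) row) lam.

Definition sign (lam : tableau) : int :=
  (-1) ^+ (sumn (shape lam) - size (shape lam)).

Definition lattice_seq (m h : nat) (L : seq nat) : bool :=
  [&& size L == m.+2, nth 0 L 0 == 0, nth 0 L m.+1 == h & sorted leq L].

Definition is_LLS (k n r : nat) (x : tableau * seq nat) : bool :=
  let: (lam, L) := x in
  (* lam in Lambda(alpha, r) forces alpha = shape lam *)
  (in_C k r (shape lam) && in_Lambda (shape lam) r lam &&
   lattice_seq (r * k + n + 1 + size (shape lam)) (k - sumn (shape lam)) L).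

Definition wt (x : tableau * seq nat) : int := sign x.1.

Definition enumerates_LLS (k n r : nat) (s : seq (tableau * seq nat)) : Prop :=
  uniq s /\ forall x, x \in s = is_LLS k n r x.

From Pilot Require Import Defs.
From mathcomp Require Import all_boot all_order all_algebra.
From mathcomp Require Import zify ring.
Import GRing.Theory Num.Theory.

(** Peel off the first row of the tableau.  A row with [j] labels is one of
    ['C(r, j)] subsets of [{0, ..., r-1}], has sign [(-1)^j], consumes [j+1] units
    of height and adds one unit of width, while lattice sequences of width [w] and
    height [h] number ['C(w + h, h)].  So the signed count over tableaux of height
    budget [h] and base width [w = r h + t + 1] obeys
      T(h, t) = 'C(w + h, h) + sum_(1 <= j < h) (-1)^j 'C(r, j) T(h - j - 1, t + 1 + r (j + 1)).
    The partial sums S(h, t) = sum_(i <= h) 'C((r + 1) i + t, i) obey the same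
    recursion: expanding S(h - 1, t + 1) along the alternating Vandermonde identity
    sum_j (-1)^j 'C(r, j) 'C(B + r + m - j, m - j) = 'C(B + m, m) gives the sum over
    [j], and a Pascal rule for S supplies the remaining terms.  The theorem is the
    case h = k, t = n. *)

Set Implicit Arguments.
Unset Strict Implicit.
Unset Printing Implicit Defensive.

Section Subseqs.
Variable T : eqType.

Fixpoint subseqs (s : seq T) : seq (seq T) :=
  if s is x :: s' then [seq x :: t | t <- subseqs s'] ++ subseqs s' else [:: [::]].

Lemma mem_map_cons (x y : T) (t : seq T) (ts : seq (seq T)) :
  (x :: t \in [seq y :: u | u <- ts]) = (x == y) && (t \in ts).
Proof. by apply/mapP/andP => [[u ? [-> ->]] | [/eqP -> ?]]; [split | exists t]. Qed.

Lemma mem_subseqs s t : (t \in subseqs s) = subseq t s.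
Proof.
elim: s t => [|y s IHs] t; first by rewrite mem_seq1 subseq0.
rewrite [subseqs _]/= mem_cat IHs; case: t => [|x t]; first by rewrite sub0seq orbT.
rewrite mem_map_cons IHs /=; case: eqP => [-> | _] //=.
by apply/orb_idr/cons_subseq.
Qed.

Lemma subseqs_uniq s : uniq s -> uniq (subseqs s).
Proof.
elim: s => [|y s IHs] //= /andP[ys /IHs uniq_s].
rewrite cat_uniq map_inj_uniq ?uniq_s ?andbT //=; last by move=> ? ? [].
apply/hasPn => t; rewrite mem_subseqs => sub_t; apply/mapP => -[u _ tE].
by move: sub_t ys; rewrite tE => /mem_subseq ->; rewrite ?mem_head.
Qed.

Lemma sum_subseqs_size (V : nmodType) s (F : nat -> V) :
  (\sum_(t <- subseqs s) F (size t) = \sum_(0 <= j < (size s).+1) F j *+ 'C(size s, j))%R.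
Proof.
elim: s F => [|y s IHs] F; first by rewrite big_seq1 big_nat1.
rewrite [subseqs _]/= big_cat big_map /= (IHs (fun j => F j.+1)) IHs.
rewrite [in RHS]big_nat_recl //; under [in RHS]eq_bigr do rewrite binS mulrnDr.
rewrite big_split /= addrA addrC; congr (_ + _)%R.
rewrite big_nat_recl // [in RHS]big_nat_recr //= !bin0 bin_small // mulr0n addr0.
by rewrite addrC.
Qed.

Lemma sum_subseqs_size_lt (V : nmodType) s (F : nat -> V) h :
  (\sum_(t <- subseqs s | (0 < size t < h)%N) F (size t) =
   \sum_(1 <= j < h) F j *+ 'C(size s, j))%R.
Proof.
rewrite big_mkcond (sum_subseqs_size s (fun j => if 0 < j < h then F j else 0%R)).
rewrite (big_nat_widen _ _ _ _ _ (leq_addr h (size s).+1)) big_mkcond.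
rewrite [RHS](big_nat_widenl _ 0) // [RHS](big_nat_widen _ _ _ _ _ (leq_addl (size s).+1 h)).
rewrite [RHS]big_mkcond; apply: eq_bigr => j _ /=.
case: ltnP => [_ | lt_s_j]; first by case: ifP; rewrite ?mul0rn.
by rewrite bin_small // mulr0n; case: ifP.
Qed.

End Subseqs.

Lemma subseq_iotaE lo d s :
  subseq s (iota lo d) = sorted ltn s && all (fun x => lo <= x < lo + d) s.
Proof.
apply/idP/andP => [sub_s | [sorted_s bounded_s]].
  split; first exact: (subseq_sorted ltn_trans sub_s (iota_ltn_sorted lo d)).
  by apply/allP => x /(mem_subseq sub_s); rewrite mem_iota.
apply/subseq_uniqP; first exact: iota_uniq.
apply: (irr_sorted_eq ltn_trans ltnn) => //.
  by rewrite sorted_filter ?iota_ltn_sorted //; exact: ltn_trans.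
by move=> x; rewrite mem_filter mem_iota andb_idr //; exact: (allP bounded_s).
Qed.

Fixpoint mono_seqs (lo h m : nat) : seq (seq nat) :=
  if m is m'.+1 then [seq x :: s | x <- iota lo (h.+1 - lo), s <- mono_seqs x h m']
  else [:: [::]].

Lemma mem_mono_seqs lo h m s : lo <= h ->
  (s \in mono_seqs lo h m) = (size s == m) && path leq lo (rcons s h).
Proof.
elim: m lo s => [|m IHm] lo [|x t] le_lo_h; rewrite ?mem_seq1 //= ?le_lo_h //.
  by apply/allpairsPdep => -[y [u [_ _ []]]].
apply/allpairsPdep/idP => [[y [u [y_in u_in [-> ->]]]] |].
  move: y_in u_in; rewrite mem_iota => /andP[-> y_le] /=.
  by rewrite IHm //; lia.
move=> /andP[/eqP[size_t] /andP[le_lo_x path_t]].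
have le_x_h : x <= h.
  by move: path_t; rewrite (path_sortedE leq_trans) all_rcons => /andP[/andP[]].
by exists x, t; rewrite mem_iota IHm // le_lo_x size_t eqxx path_t; split=> //; lia.
Qed.

Lemma mono_seqs_uniq lo h m : uniq (mono_seqs lo h m).
Proof.
elim: m lo => [|m IHm] lo //=.
by apply: allpairs_uniq_dep => [|x _|[x1 t1] [x2 t2] _ _ [-> ->]] //; apply: iota_uniq.
Qed.

Lemma size_mono_seqs lo h m : lo <= h -> size (mono_seqs lo h m) = 'C(m + (h - lo), m).
Proof.
elim: m lo => [|m IHm] lo le_lo_h; first by rewrite bin0.
rewrite /= size_allpairs_dep.
suff sum_sizes d x0 : x0 + d = h.+1 ->
    sumn [seq size (mono_seqs x h m) | x <- iota x0 d] = 'C(m + d, m.+1).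
  by rewrite sum_sizes; [congr 'C(_, _) | ]; lia.
elim: d x0 => [|d IHd] x0 x0d /=; first by rewrite addn0 bin_small.
rewrite IHd; last lia.
rewrite IHm; last lia.
have -> : h - x0 = d by lia.
by rewrite addnS binS addnC.
Qed.

Definition lattice_seqs m h := [seq 0 :: rcons M h | M <- mono_seqs 0 h m].

Lemma mem_lattice_seqs m h L : (L \in lattice_seqs m h) = lattice_seq m h L.
Proof.
rewrite /lattice_seq; apply/mapP/idP => [[M] | ].
  rewrite mem_mono_seqs // => /andP[/eqP size_M path_M] ->.
  by rewrite /= size_rcons size_M nth_rcons size_M ltnn !eqxx.
case: L => [|a L]; first by case/and4P.
case/lastP: L => [|M b] /and4P[] //=; rewrite size_rcons !eqSS => size_M /eqP-> .
rewrite nth_rcons (eqP size_M) ltnn eqxx => /eqP-> path_M.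
by exists M; rewrite // mem_mono_seqs // size_M.
Qed.

Lemma lattice_seqs_uniq m h : uniq (lattice_seqs m h).
Proof.
by rewrite map_inj_uniq ?mono_seqs_uniq // => M1 M2 [] /rcons_inj[].
Qed.

Lemma size_lattice_seqs m h : size (lattice_seqs m h) = 'C(m + h, h).
Proof.
by rewrite size_map size_mono_seqs // subn0 -[m in 'C(_, m)](addnK h) bin_sub ?leq_addl.
Qed.

Lemma sumn_shape (lam : tableau) : sumn (Defs.shape lam) = sumn (map size lam) + size lam.
Proof. by elim: lam => [|row lam IH] //=; lia. Qed.

Lemma sign_cons row (lam : tableau) : sign (row :: lam) = ((-1) ^+ size row * sign lam)%R.
Proof. by rewrite /sign !size_map !sumn_shape !addnK -exprD. Qed.

Lemma in_Lambda_shape r (lam : tableau) :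
  in_Lambda (Defs.shape lam) r lam = all (fun row => subseq row (iota 0 r)) lam.
Proof.
rewrite /in_Lambda eqxx; apply: eq_all => row.
by rewrite subseq_iotaE; congr andb; apply: eq_all => x.
Qed.

Definition is_LLS_at r h w (x : tableau * seq nat) : bool :=
  let: (lam, L) := x in
  [&& all (fun row => (0 < size row) && subseq row (iota 0 r)) lam,
      sumn (Defs.shape lam) <= h & lattice_seq (w + size lam) (h - sumn (Defs.shape lam)) L].

Fixpoint LLS_enum r m h w : seq (tableau * seq nat) :=
  [seq ([::], L) | L <- lattice_seqs w h] ++
  if m is m'.+1 then
    [seq (row :: x.1, x.2) | row <- [seq row <- subseqs (iota 0 r) | 0 < size row < h],
                             x <- LLS_enum r m' (h - (size row).+1) w.+1]
  else [::].

Lemma is_LLS_at_cons r h w row lam L :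
  is_LLS_at r h w (row :: lam, L) =
  [&& 0 < size row < h, subseq row (iota 0 r) & is_LLS_at r (h - (size row).+1) w.+1 (lam, L)].
Proof.
rewrite /is_LLS_at /= addnS -addSn subnDA -!andbA.
have -> : ((size row).+1 + sumn (Defs.shape lam) <= h) =
          (size row < h) && (sumn (Defs.shape lam) <= h - (size row).+1) by lia.
by case: (size row < h); rewrite /= ?andbF.
Qed.

Lemma mem_map_pair (T1 T2 : eqType) (x a : T1) (y : T2) s :
  ((x, y) \in [seq (a, z) | z <- s]) = (x == a) && (y \in s).
Proof. by apply/mapP/andP => [[z ? [-> ->]] | [/eqP -> ?]]; [split | exists y]. Qed.

Lemma mem_LLS_enum r m h w x : h <= m -> (x \in LLS_enum r m h w) = is_LLS_at r h w x.
Proof.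
elim: m h w x => [|m IHm] h w [lam L] le_h_m;
  rewrite [LLS_enum _ _ _ _]/= -/LLS_enum mem_cat mem_map_pair mem_lattice_seqs.
- case: lam => [|row lam]; first by rewrite /is_LLS_at /= addn0 subn0 orbF.
  by rewrite is_LLS_at_cons; case: h le_h_m => // _; rewrite ltn0 andbF.
- case: lam => [|row lam].
    rewrite /is_LLS_at /= addn0 subn0 (_ : _ \in _ = false) ?orbF //.
    by apply/allpairsPdep => -[? [? [_ _ []]]].
  apply/allpairsPdep/idP => [[row' [[lam' L'] [row_in x_in [-> -> ->]]]] | ].
    move: row_in x_in; rewrite is_LLS_at_cons mem_filter mem_subseqs IHm; last lia.
    by move=> /andP[-> ->] ->.
  rewrite is_LLS_at_cons => /and3P[row_h row_sub x_ok]; exists row, (lam, L).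
  by rewrite mem_filter mem_subseqs row_h row_sub IHm //; lia.
Qed.

Lemma LLS_enum_uniq r m h w : uniq (LLS_enum r m h w).
Proof.
elim: m h w => [|m IHm] h w /=.
  by rewrite cats0 map_inj_uniq ?lattice_seqs_uniq // => ? ? [].
rewrite cat_uniq map_inj_uniq ?lattice_seqs_uniq; last by move=> ? ? [].
apply/and3P; split=> //.
  by apply/hasPn => _ /allpairsPdep[row [x [_ _ ->]]]; apply/mapP => -[? _ []].
apply: allpairs_uniq_dep => [|row _|[row1 [lam1 L1]] [row2 [lam2 L2]] _ _ [-> -> ->]] //.
by rewrite filter_uniq // subseqs_uniq // iota_uniq.
Qed.

Lemma in_C_shape k r (lam : tableau) :
  in_C k r (Defs.shape lam) =
  all (fun row => 0 < size row <= r) lam && (sumn (Defs.shape lam) <= k).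
Proof.
rewrite /in_C /in_c /composition !all_map.
apply/existsP/andP => [[m /and3P[_ parts /eqP sum_m]] | [parts le_sum_k]].
  by rewrite sum_m -ltnS; split=> //; apply: sub_all parts.
have lt_sum_k : sumn (Defs.shape lam) < k.+1 by [].
exists (Ordinal lt_sum_k); rewrite eqxx andbT; apply/andP.
by split; [apply/allP | apply: sub_all parts].
Qed.

Lemma is_LLSE k n r x : is_LLS k n r x = is_LLS_at r k (r * k + n.+1) x.
Proof.
case: x => lam L; rewrite /is_LLS /is_LLS_at in_Lambda_shape in_C_shape size_map addn1 -addnS.
have -> : all (fun row => (0 < size row) && subseq row (iota 0 r)) lam =
          all (fun row => 0 < size row <= r) lam && all (subseq^~ (iota 0 r)) lam.
  rewrite -all_predI; apply: eq_all => row /=.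
  case sub_row: (subseq row (iota 0 r)); rewrite ?andbF ?andbT //.
  by rewrite -(size_iota 0 r) (size_subseq sub_row) andbT.
by rewrite -!andbA; congr andb; apply: andbCA.
Qed.

Local Open Scope ring_scope.

Lemma alt_bin_conv r B m :
  \sum_(0 <= j < m.+1) ((-1) ^+ j * ('C(B + r + (m - j), m - j))%:Z) *+ 'C(r, j)
    = ('C(B + m, m))%:Z.
Proof.
elim: r B m => [|r IHr] B m.
  rewrite big_nat_recl // big1 => [|j _]; last by rewrite bin0n mulr0n.
  by rewrite bin0 addn0 subn0 mul1r addr0.
case: m => [|m]; first by rewrite big_nat1 !bin0 mul1r.
have IHm := IHr B.+1 m; have IHm1 := IHr B.+1 m.+1.
rewrite big_nat_recl // bin0 in IHm1.
rewrite (_ : (B + r.+1 = B.+1 + r)%N); last by lia.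
rewrite big_nat_recl //; under eq_bigr => j _ do rewrite binS mulrnDr.
rewrite big_split /= bin0 addrA IHm1.
under [X in _ + X]eq_bigr => j _ do rewrite subSS exprS mulN1r mulNr mulNrn.
by rewrite sumrN IHm addSn binS addSnnS PoszD addrK.
Qed.

Definition binsum r h t := (\sum_(0 <= i < h.+1) 'C(r.+1 * i + t, i))%N.

Lemma binsum0 r t : binsum r 0 t = 1%N.
Proof. by rewrite /binsum big_nat1 bin0. Qed.

Lemma binsumS r h t : binsum r h.+1 t = (binsum r h t + 'C(r.+1 * h.+1 + t, h.+1))%N.
Proof. by rewrite /binsum big_nat_recr. Qed.

Lemma binsum_alt r h u :
  (binsum r h u)%:Z =
  \sum_(0 <= j < h.+1) ((-1) ^+ j * (binsum r (h - j) (r * j.+1 + u))%:Z) *+ 'C(r, j).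
Proof.
elim: h => [|h IHh]; first by rewrite big_nat1 !binsum0 bin0 mul1r.
rewrite binsumS PoszD IHh (_ : r.+1 * h.+1 + u = r * h.+1 + u + h.+1)%N; last first.
  by rewrite mulSn; lia.
rewrite -(alt_bin_conv r (r * h.+1 + u)).
rewrite [in RHS]big_nat_recr // [X in _ + X = _]big_nat_recr // addrA -big_split /=.
(* [congr] would try to close the summand equation by conversion, unfolding [binsum]. *)
rewrite !subnn binsum0 bin0; apply: (congr2 +%R); last by [].
apply: eq_big_nat => j /andP[_]; rewrite ltnS => le_j_h.
rewrite (subSn le_j_h) binsumS PoszD mulrDr mulrnDl.
by rewrite (_ : r * h.+1 + u + r + (h - j).+1 = r.+1 * (h - j).+1 + (r * j.+1 + u))%N;
  last nia.
Qed.

Lemma binsum_pascal r h t :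
  (binsum r h.+1 t + binsum r h (r.+1 + t) = binsum r h.+1 t.+1)%N.
Proof.
elim: h => [|h IHh]; first by rewrite !binsumS !binsum0 !bin1; lia.
rewrite (binsumS r h.+1 t) (binsumS r h (r.+1 + t)) (binsumS r h.+1 t.+1) -IHh addnS binS.
rewrite (_ : r.+1 * h.+1 + (r.+1 + t) = r.+1 * h.+2 + t)%N; first lia.
by rewrite [in RHS]mulnS; lia.
Qed.

Lemma binsum_rec r h t :
  (binsum r h t)%:Z = ('C(r.+1 * h + t.+1, h))%:Z +
  \sum_(1 <= j < h) ((-1) ^+ j * (binsum r (h - j.+1) (r * j.+1 + t.+1))%:Z) *+ 'C(r, j).
Proof.
case: h => [|h]; first by rewrite binsum0 bin0 big_geq // addr0.
under eq_bigr do rewrite subSS.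
rewrite big_add1 /=.
have /(congr1 Posz) := binsum_pascal r h t; rewrite (binsumS r h t.+1).
(* An unrestricted [PoszD] would also unfold ['C(_.+1, _.+1)] into its Pascal sum. *)
rewrite [Posz (_ + _)]PoszD [X in _ = X]PoszD => pascal.
have alt := binsum_alt r h t.+1.
rewrite big_nat_recl // subn0 muln1 bin0 mulr1n expr0 mul1r -addSnnS in alt.
apply: (addIr (binsum r h (r.+1 + t))%:Z); rewrite pascal alt; ring.
Qed.

Lemma sum_wt_lattice w h : \sum_(L <- lattice_seqs w h) wt ([::], L) = ('C(w + h, h))%:Z.
Proof. by rewrite (eq_bigr (fun=> 1%:R)) // -natr_sum sum1_size natz size_lattice_seqs. Qed.

Lemma sum_wt_LLS_enum r m h w t : (h <= m)%N -> w = (r * h + t.+1)%N ->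
  \sum_(x <- LLS_enum r m h w) wt x = (binsum r h t)%:Z.
Proof.
elim: m h w t => [|m IHm] h w t le_h_m ->;
  rewrite [LLS_enum _ _ _ _]/= -/LLS_enum big_cat big_map sum_wt_lattice /=.
  by case: h le_h_m => // _; rewrite big_nil addr0 binsum0 bin0.
pose F j := (-1) ^+ j * (binsum r (h - j.+1) (r * j.+1 + t.+1))%:Z.
rewrite binsum_rec (_ : r * h + t.+1 + h = r.+1 * h + t.+1)%N; last by rewrite mulSn; lia.
rewrite big_allpairs_dep big_filter /= (eq_bigr (F \o size)).
  by rewrite (sum_subseqs_size_lt _ F) size_iota.
move=> row /andP[_ lt_row_h]; under eq_bigr do rewrite /wt sign_cons.
by rewrite -mulr_sumr (IHm _ _ (r * (size row).+1 + t.+1)); [| lia | nia].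
Qed.

Theorem theorem3p1 (k n r : nat) :
  (exists s : seq (tableau * seq nat), enumerates_LLS k n r s) /\
  (forall s : seq (tableau * seq nat), enumerates_LLS k n r s ->
     \sum_(x <- s) wt x = (\sum_(0 <= i < k.+1) 'C((r.+1) * i + n, i))%:R).
Proof.
have mem_enum x : (x \in LLS_enum r k k (r * k + n.+1)) = is_LLS k n r x.
  by rewrite is_LLSE mem_LLS_enum.
split.
  by exists (LLS_enum r k k (r * k + n.+1)); split; [exact: LLS_enum_uniq | exact: mem_enum].
move=> s [uniq_s mem_s].
have perm_s : perm_eq s (LLS_enum r k k (r * k + n.+1)).
  by apply: uniq_perm => // [|x]; [exact: LLS_enum_uniq | rewrite mem_s mem_enum].
by rewrite (perm_big _ perm_s) (sum_wt_LLS_enum (t := n)) // natz.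
Qed.
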